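(* Fix $b\in\mathbb{N}$. Any $b$-pattern $P$ consisting of crosses and exactly one circle is realizable in $L=\mathbb{N}\times\mathbb{N}$. Consequently, the graph $G_b$ is not connected.
   Context: For $r,s\in\mathbb{N}$, $\gcd_b(r,s)=\max\{k\in\mathbb{N} : k\mid r \text{ and } k^b\mid s\}$; a point $(r,s)\in L$ is $b$-visible if $\gcd_b(r,s)=1$ and $b$-invisible otherwise. A $b$-pattern $P$ is obtained by choosing a positive integer $w$ and assigning to each $(r,s)\in L$ with $1\le r\le w$, $1\le s\le w^b$ either a cross, a circle, or neither. $P$ is realizable in $L$ if there is $(u,v)\in L$ such that $(u+r,v+s)$ is $b$-visible for every circle $(r,s)$ of $P$ and $b$-invisible for every cross $(r,s)$ of $P$. The graph $G_b$ has as vertices the $b$-visible points of $L$, with an edge between two such points whenever their Euclidean distance is $1$. *)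

From mathcomp Require Import all_boot.
Set Implicit Arguments. Unset Strict Implicit. Unset Printing Implicit Defensive.

(* Convention: N = {1,2,3,...}; L = N x N, represented by pairs of nats
   with both coordinates positive. *)

(* gcd_b(r,s) = max { k in N : k | r and k^b | s }  (for r >= 1 every such k
   is <= r, and k = 1 always qualifies). *)
Definition gcdb (b r s : nat) : nat :=
  \max_(k < r.+1 | (0 < k) && (k %| r) && (k ^ b %| s)) k.

Definition bvisible (b r s : nat) : bool := gcdb b r s == 1.

Definition inL (p : nat * nat) : bool := (0 < p.1) && (0 < p.2).

(* A b-pattern of width w: each (r,s) with 1<=r<=w, 1<=s<=w^b gets
   Some true (circle), Some false (cross) or None (neither).
   Values outside the box are irrelevant. *)
Definition pattern := nat -> nat -> option bool.

Definition in_box (b w r s : nat) : Prop :=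
  1 <= r <= w /\ 1 <= s <= w ^ b.

Definition realizable (b w : nat) (P : pattern) : Prop :=
  exists u v : nat, inL (u, v) /\
    forall r s, in_box b w r s ->
      (P r s = Some true -> bvisible b (u + r) (v + s)) /\
      (P r s = Some false -> ~~ bvisible b (u + r) (v + s)).

(* P consists of crosses and exactly one circle (other points may be
   crosses or unmarked). *)
Definition crosses_and_one_circle (b w : nat) (P : pattern) : Prop :=
  (exists r0 s0, in_box b w r0 s0 /\ P r0 s0 = Some true) /\
  (forall r s r' s', in_box b w r s -> in_box b w r' s' ->
     P r s = Some true -> P r' s' = Some true -> r = r' /\ s = s').

Definition Gb_vertex (b : nat) (p : nat * nat) : bool :=
  inL p && bvisible b p.1 p.2.

Definition unit_dist (p q : nat * nat) : bool :=
  ((p.1 == q.1) && ((p.2 == q.2.+1) || (q.2 == p.2.+1))) ||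
  ((p.2 == q.2) && ((p.1 == q.1.+1) || (q.1 == p.1.+1))).

Definition Gb_edge (b : nat) : rel (nat * nat) :=
  fun p q => [&& Gb_vertex b p, Gb_vertex b q & unit_dist p q].

Definition Gb_connected (b : nat) : Prop :=
  forall p q, Gb_vertex b p -> Gb_vertex b q ->
    exists s : seq (nat * nat), path (Gb_edge b) p s /\ last p s = q.

(* Let K bound the coordinates of the box.  The crosses are handled one at a time: if M
   is the product of the moduli used so far, the next cross c gets the modulus
   k = K`! * M + 1, and the Chinese remainder theorem moves (u, v) so that k divides
   u + c.1 and k ^ b divides v + c.2, without disturbing u mod M and v mod M ^ b.
   Every divisor > 1 of k exceeds K, while the circle differs from c by at most K in
   some coordinate, so no such modulus shares a factor with both of its coordinates.
   A last CRT step on v makes the circle's coordinates coprime outright.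
   Realizing the 3 x 3 pattern whose only circle is the centre gives a visible point
   with four invisible neighbours, cut off from (1, 1). *)

From mathcomp Require Import all_boot zify.

Set Implicit Arguments.
Unset Strict Implicit.
Unset Printing Implicit Defensive.

Lemma bvisibleP b x y : 0 < x ->
  reflect (forall k, 1 < k -> k %| x -> k ^ b %| y -> False) (bvisible b x y).
Proof.
move=> x_gt0; rewrite /bvisible /gcdb.
have le_gcdb k : 0 < k -> k %| x -> k ^ b %| y ->
    k <= \max_(i < x.+1 | (0 < i) && (i %| x) && (i ^ b %| y)) i.
  move=> k_gt0 kx ky; have k_lt : k < x.+1 by rewrite ltnS dvdn_leq.
  by apply: (@leq_bigmax_cond _ _ _ (Ordinal k_lt)); rewrite /= k_gt0 kx ky.
apply: (iffP eqP) => [gcdb1 k k_gt1 kx ky | noK].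
  by have := le_gcdb k (ltnW k_gt1) kx ky; rewrite gcdb1 leqNgt k_gt1.
apply/eqP; rewrite eqn_leq le_gcdb ?dvd1n ?exp1n // andbT.
apply/bigmax_leqP => i /andP[/andP[_ ix] iy].
by rewrite leqNgt; apply/negP => i_gt1; apply: noK i_gt1 ix iy.
Qed.

Lemma bvisibleN b x y k : 0 < x -> 1 < k -> k %| x -> k ^ b %| y ->
  ~~ bvisible b x y.
Proof. by move=> x_gt0 k_gt1 kx ky; apply/(bvisibleP _ _ x_gt0) => /(_ k k_gt1 kx ky). Qed.

Lemma coprime_bvisible b x y : 0 < b -> 0 < x -> coprime x y -> bvisible b x y.
Proof.
move=> b_gt0 x_gt0 co; apply/bvisibleP => // k k_gt1 kx kby.
have ky : k %| y by apply: dvdn_trans kby; apply: dvdn_exp.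
by move: (dvdn_gcd k x y); rewrite kx ky (eqP co) dvdn1 => /eqP k1; rewrite k1 in k_gt1.
Qed.

Lemma eqmodDr c m x y : x = y %[mod m] -> x + c = y + c %[mod m].
Proof. by move=> e; rewrite -modnDml e modnDml. Qed.

Lemma eqmod_dvd d m x y : d %| m -> x = y %[mod m] -> x = y %[mod d].
Proof. by move=> dm e; rewrite -(modn_dvdm x dm) e modn_dvdm. Qed.

Lemma dvdn_eqmodD d m x y c : d %| m -> x = y %[mod m] ->
  (d %| x + c) = (d %| y + c).
Proof. by move=> dm /(eqmodDr c)/(eqmod_dvd dm); rewrite /dvdn => ->. Qed.

Lemma coprime_gcdn_eqmod M x x' y y' : x = x' %[mod M] -> y = y' %[mod M] ->
  coprime M (gcdn x y) = coprime M (gcdn x' y').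
Proof.
have gcdE z t : gcdn M (gcdn z t) = gcdn (gcdn M (z %% M)) (gcdn M (t %% M)).
  by rewrite !gcdn_modr -gcdnACA gcdnn.
by rewrite /coprime !gcdE => -> ->.
Qed.

Lemma dvdn_pred_mulD k r : 0 < k -> k %| k.-1 * r + r.
Proof. by move=> k_gt0; rewrite -mulSnr prednK ?dvdn_mulr. Qed.

Lemma coprime_fact_succ K M n : 0 < n <= K -> coprime (K`! * M + 1) n.
Proof.
move=> n_range; have /(dvdn_mulr M) nKM := dvdn_fact n_range.
by rewrite coprime_sym /coprime -(divnK nKM) gcdnMDl gcdn1.
Qed.

Lemma fact_succ_shift_eq1 K M d x a a' :
  d %| K`! * M + 1 -> d %| x + a -> d %| x + a' -> a != a' -> a <= K -> a' <= K ->
  d = 1.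
Proof.
move=> dk.
wlog lt_aa' : a a' / a < a' => [wlog da da' neq aK a'K | da da' _ _ a'K].
  case: (ltngtP a a') => [lt | gt | eq]; first exact: (wlog a a').
    by apply: (wlog a' a); rewrite // eq_sym.
  by rewrite eq eqxx in neq.
have d_diff : d %| a' - a by rewrite -(subnDl x) dvdn_sub.
have co : coprime (K`! * M + 1) (a' - a).
  by apply: coprime_fact_succ; rewrite subn_gt0 lt_aa' (leq_trans (leq_subr _ _)).
by apply/eqP; rewrite -dvdn1 -(eqP co) dvdn_gcd dk d_diff.
Qed.

Definition invisible_mod b M u v (c : nat * nat) : Prop :=
  exists k, [/\ 1 < k, k %| M, k %| u + c.1 & k ^ b %| v + c.2].

Lemma invisible_mod_congr b M M' u u' v v' c : M %| M' ->
  u' = u %[mod M] -> v' = v %[mod M ^ b] ->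
  invisible_mod b M u v c -> invisible_mod b M' u' v' c.
Proof.
move=> MM' eu ev [k [k_gt1 kM ku kv]]; exists k; split => //.
- exact: dvdn_trans kM MM'.
- by rewrite (dvdn_eqmodD _ kM eu).
- by rewrite (dvdn_eqmodD _ (dvdn_exp2r b kM) ev).
Qed.

Lemma invisible_mod_bvisibleN b M u v c : 0 < u + c.1 ->
  invisible_mod b M u v c -> ~~ bvisible b (u + c.1) (v + c.2).
Proof. by move=> pos [k [k_gt1 _ ku kv]]; apply: bvisibleN ku kv. Qed.

Section Crosses.

Variables b r0 s0 K : nat.
Hypotheses (b_gt0 : 0 < b) (r0K : r0 <= K) (s0K : s0 <= K).

(* The modulus K`! * M + 1 is coprime to M and has no divisor in 2..K, so it cannot
   divide both coordinates of the circle, which differs from (r, s) by at most K. *)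
Lemma add_cross M u v r s : 0 < M -> (r, s) != (r0, s0) -> r <= K -> s <= K ->
  coprime M (gcdn (u + r0) (v + s0)) ->
  exists u' v', [/\ u' = u %[mod M], v' = v %[mod M ^ b],
    invisible_mod b (K`! * M + 1) u' v' (r, s) &
    coprime (M * (K`! * M + 1)) (gcdn (u' + r0) (v' + s0))].
Proof.
move=> M_gt0 neq rK sK co; set k := K`! * M + 1.
have k_gt0 : 0 < k by rewrite /k addn1.
have coMk : coprime M k by rewrite /coprime /k gcdnMDl gcdn1.
have coMkb : coprime (M ^ b) (k ^ b) by rewrite coprimeXl ?coprimeXr.
pose u' := chinese M k u (k.-1 * r).
pose v' := chinese (M ^ b) (k ^ b) v ((k ^ b).-1 * s).
have ku : k %| u' + r.
  by rewrite (dvdn_eqmodD r (dvdnn k) (chinese_modr coMk _ _)) dvdn_pred_mulD.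
have kbv : k ^ b %| v' + s.
  rewrite (dvdn_eqmodD s (dvdnn _) (chinese_modr coMkb _ _)).
  by rewrite dvdn_pred_mulD ?expn_gt0 ?k_gt0.
have kv : k %| v' + s by apply: dvdn_trans kbv; apply: dvdn_exp.
have ev : v' = v %[mod M ^ b] by apply: chinese_modl.
exists u', v'; split => //; first exact: chinese_modl.
  by exists k; split; rewrite // /k addn1 ltnS muln_gt0 fact_gt0.
rewrite coprimeMl; apply/andP; split.
  have ev_M : v' = v %[mod M] by apply: eqmod_dvd ev; apply: dvdn_exp.
  by rewrite (coprime_gcdn_eqmod (eqmodDr r0 (chinese_modl coMk _ _)) (eqmodDr s0 ev_M)).
set g := gcdn _ _; have dk := dvdn_gcdl k g; have dg := dvdn_gcdr k g.
apply/eqP; move: neq; rewrite xpair_eqE negb_and => /orP[neq | neq].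
  apply: (fact_succ_shift_eq1 dk (dvdn_trans dg (dvdn_gcdl _ _)) _ _ r0K rK).
    by apply: dvdn_trans dk ku.
  by rewrite eq_sym.
apply: (fact_succ_shift_eq1 dk (dvdn_trans dg (dvdn_gcdr _ _)) _ _ s0K sK).
  by apply: dvdn_trans dk kv.
by rewrite eq_sym.
Qed.

Lemma realize_crosses (cs : seq (nat * nat)) :
  {in cs, forall c, [/\ c != (r0, s0), c.1 <= K & c.2 <= K]} ->
  exists u v M, [/\ 0 < M, coprime M (gcdn (u + r0) (v + s0)) &
    {in cs, forall c, invisible_mod b M u v c}].
Proof.
elim: cs => [|[r s] cs IH] cs_ok.
  by exists 0, 0, 1; rewrite coprime1n.
have [|u [v [M [M_gt0 co inv]]]] := IH.
  by move=> c c_cs; apply: cs_ok; rewrite inE c_cs orbT.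
have [neq rK sK] := cs_ok (r, s) (mem_head _ _).
have [u' [v' [eu ev inv_rs co']]] := add_cross M_gt0 neq rK sK co.
exists u', v', (M * (K`! * M + 1)); split => //; first by rewrite muln_gt0 M_gt0 addn1.
move=> c; rewrite inE => /orP[/eqP -> | c_cs].
  exact: invisible_mod_congr (dvdn_mull _ (dvdnn _)) erefl erefl inv_rs.
exact: invisible_mod_congr (dvdn_mulr _ (dvdnn _)) eu ev (inv c c_cs).
Qed.

End Crosses.

(* Common factors of A and v + c avoid \pi(M), so making v + c = 1 modulo the
   \pi(M)'-part of A removes them without changing v modulo M ^ e. *)
Lemma coprime_eqmod_lift A M e v c : 0 < A -> 0 < M -> 0 < e ->
  coprime M (gcdn A (v + c)) ->
  exists v', [/\ 0 < v', v' = v %[mod M ^ e] & coprime A (v' + c)].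
Proof.
move=> A_gt0 M_gt0 e_gt0 co.
set A' := A`_(\pi(M))^'.
have A'_gt0 : 0 < A' by apply: part_gt0.
have coMA' : coprime (M ^ e) A'.
  by rewrite coprime_pexpl // (pnat_coprime (pnat_pi M_gt0) (part_pnat _ _)).
pose v' := chinese (M ^ e) A' v (A'.-1 * c).+1 + M ^ e * A'.
have ev : v' = v %[mod M ^ e] by rewrite /v' addnC mulnC modnMDl chinese_modl.
have ev' : v' = (A'.-1 * c).+1 %[mod A'] by rewrite /v' addnC modnMDl chinese_modr.
exists v'; split => //; first by rewrite addn_gt0 muln_gt0 expn_gt0 M_gt0 A'_gt0 orbT.
set g := gcdn A (v' + c).
have coMg : coprime M g.
  rewrite (coprime_gcdn_eqmod (x' := A) (y' := v + c)) //.
  by apply/eqmodDr/(eqmod_dvd _ ev)/dvdn_exp.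
have gA' : g %| A'.
  have g_gt0 : 0 < g by rewrite gcdn_gt0 A_gt0.
  have pi'g : (\pi(M))^'.-nat g by rewrite -coprime_pi'.
  by rewrite -(part_pnat_id pi'g) partn_dvd ?dvdn_gcdl.
have := dvdn_gcdr A (v' + c); rewrite -/g (dvdn_eqmodD c gA' ev').
by rewrite addSn -mulSnr prednK // -addn1 dvdn_addr ?dvdn_mulr // dvdn1.
Qed.

Lemma one_circle_realizable b w P : 0 < b ->
  crosses_and_one_circle b w P -> realizable b w P.
Proof.
move=> b_gt0 [[r0 [s0 [box0 P0]]] one_circle].
have [/andP[r0_gt0 r0w] /andP[s0_gt0 s0w]] := box0.
set K := w + w ^ b.
set cs := [seq c <- [seq (r, s) | r <- iota 1 w, s <- iota 1 (w ^ b)] | c != (r0, s0)].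
have cs_ok : {in cs, forall c, [/\ c != (r0, s0), c.1 <= K & c.2 <= K]}.
  move=> c; rewrite mem_filter => /andP[neq /allpairsP[[r s] /= [hr hs c_rs]]].
  by subst c; move: hr hs; rewrite !mem_iota /K => hr hs; split => //=; lia.
have r0K : r0 <= K by rewrite /K; lia.
have s0K : s0 <= K by rewrite /K; lia.
have [u [v [M [M_gt0 co inv]]]] := realize_crosses b_gt0 r0K s0K cs_ok.
have eu : u + M = u %[mod M] by apply: modnDr.
have A_gt0 : 0 < u + M + r0 by rewrite addn_gt0 r0_gt0 orbT.
have coM : coprime M (gcdn (u + M + r0) (v + s0)).
  by rewrite (coprime_gcdn_eqmod (y' := v + s0) (eqmodDr r0 eu)).
have [v' [v'_gt0 ev co']] := coprime_eqmod_lift A_gt0 M_gt0 b_gt0 coM.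
exists (u + M), v'; split; first by rewrite /inL /= addn_gt0 M_gt0 orbT.
move=> r s rs_box; split=> Prs.
  have [-> ->] := one_circle _ _ _ _ rs_box box0 Prs P0.
  by apply: coprime_bvisible; rewrite // addn_gt0 r0_gt0 orbT.
have [/andP[r_gt0 rw] /andP[s_gt0 sw]] := rs_box.
have rs_cs : (r, s) \in cs.
  rewrite mem_filter; apply/andP; split.
    by apply/negP => /eqP[er es]; rewrite er es P0 in Prs.
  by apply/allpairsP; exists (r, s); rewrite !mem_iota; split => //=; lia.
apply: (@invisible_mod_bvisibleN b M (u + M) v' (r, s)).
  by rewrite /= addn_gt0 r_gt0 orbT.
exact: invisible_mod_congr (dvdnn M) eu ev (inv _ rs_cs).
Qed.

Lemma Gb_vertex11 b : Gb_vertex b (1, 1).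
Proof.
apply/andP; split => //; apply/bvisibleP => // k k_gt1 /dvdn_leq.
by move=> /(_ isT); rewrite leqNgt k_gt1.
Qed.

Lemma isolated_not_Gb_connected b p : Gb_vertex b p -> p != (1, 1) ->
  (forall q, unit_dist p q -> ~~ Gb_vertex b q) -> ~ Gb_connected b.
Proof.
move=> vp p_ne11 isolated /(_ p (1, 1) vp (Gb_vertex11 b)) [[|q s] /= [path_pq last_pq]].
  by rewrite last_pq eqxx in p_ne11.
by move: path_pq => /andP[/and3P[_ vq /isolated]]; rewrite vq.
Qed.

Lemma unit_dist_centre u v q : unit_dist (u + 2, v + 2) q ->
  exists r s, [/\ 0 < r <= 3, 0 < s <= 3, (r, s) != (2, 2) & q = (u + r, v + s)].
Proof.
case: q => x y; rewrite /unit_dist /= => /orP[] /andP[/eqP ex /orP[] /eqP ey].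
- by exists 2, 1; split => //; congr pair; lia.
- by exists 2, 3; split => //; congr pair; lia.
- by exists 1, 2; split => //; congr pair; lia.
- by exists 3, 2; split => //; congr pair; lia.
Qed.

Lemma in_box3 b r s : 0 < b -> 0 < r <= 3 -> 0 < s <= 3 -> in_box b 3 r s.
Proof.
move=> b_gt0 hr /andP[s_gt0 s3]; split => //.
by rewrite s_gt0 (leq_trans s3) // -{1}(expn1 3) leq_pexp2l.
Qed.

Definition centre_pattern : pattern := fun r s => Some ((r == 2) && (s == 2)).

Lemma centre_pattern_one_circle b : 0 < b -> crosses_and_one_circle b 3 centre_pattern.
Proof.
move=> b_gt0; split; first by exists 2, 2; split; first exact: in_box3.
by move=> r s r' s' _ _ [] /andP[/eqP -> /eqP ->] [] /andP[/eqP -> /eqP ->].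
Qed.

Theorem mainTheorem8 (b : nat) (hb : 0 < b) :
  (forall (w : nat) (P : pattern), 0 < w ->
     crosses_and_one_circle b w P -> realizable b w P) /\
  ~ Gb_connected b.
Proof.
split=> [w P _ | ]; first exact: one_circle_realizable.
have [u [v [_ realized]]] := one_circle_realizable hb (centre_pattern_one_circle hb).
have centre r s : 0 < r <= 3 -> 0 < s <= 3 ->
    bvisible b (u + r) (v + s) = (r == 2) && (s == 2).
  move=> hr hs; have [] := realized r s (in_box3 hb hr hs); rewrite /centre_pattern.
  by case: (_ && _) => [/(_ erefl) -> | _ /(_ erefl)/negbTE].
apply: (@isolated_not_Gb_connected b (u + 2, v + 2)).
- by rewrite /Gb_vertex /inL /= !addn_gt0 !orbT centre.
- by apply/eqP => -[]; lia.
- move=> q /unit_dist_centre[r [s [hr hs rs_ne ->]]].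
  by rewrite /Gb_vertex /= centre // -xpair_eqE (negbTE rs_ne) andbF.
Qed.
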